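(* Let $\mathfrak{n}$ be a $2$-step nilpotent real Lie algebra whose center $\mathfrak{z}$ has $\dim\mathfrak{z}=2$. Then every complex structure on $\mathfrak{n}$ is $2$-step. In particular, if $\mathfrak{n}'=\mathfrak{z}$ and the first Betti number of $\mathfrak{n}$ satisfies $b_1=\dim\mathfrak{n}-2$, then every complex structure on $\mathfrak{n}$ is $2$-step.
   Context: A complex structure on a real Lie algebra $\mathfrak{g}$ is a linear map $J:\mathfrak{g}\to\mathfrak{g}$ with $J^2=-I$ and $N_J(x,y):=[x,y]+J([Jx,y]+[x,Jy])-[Jx,Jy]=0$ for all $x,y\in\mathfrak{g}$. Given such $J$, define inductively $\mathfrak{a}_0(J)=0$ and $\mathfrak{a}_\ell(J)=\{x\in\mathfrak{g}: [x,\mathfrak{g}]\subset\mathfrak{a}_{\ell-1}(J)\text{ and }[Jx,\mathfrak{g}]\subset\mathfrak{a}_{\ell-1}(J)\}$ for $\ell\ge1$. $J$ is called nilpotent if $\mathfrak{a}_t(J)=\mathfrak{g}$ for some positive integer $t$, and $t$-step if $t$ is the smallest such integer. A Lie algebra $\mathfrak{n}$ is $2$-step nilpotent if it is non-abelian and $\mathfrak{n}'=[\mathfrak{n},\mathfrak{n}]\subset\mathfrak{z}$. The first Betti number is $b_1=\dim\mathfrak{n}-\dim\mathfrak{n}'$. *)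

From HB Require Import structures.
From mathcomp Require Import all_boot all_order all_algebra.
From mathcomp Require Import reals.
Set Implicit Arguments. Unset Strict Implicit. Unset Printing Implicit Defensive.
Import Order.TTheory GRing.Theory Num.Theory.
Local Open Scope ring_scope.

Section LieDefs.
Variables (R : realType) (V : vectType R).

Definition is_lie_bracket (br : V -> V -> V) : Prop :=
  [/\ (forall (a : R) (x y z : V), br (a *: x + y) z = a *: br x z + br y z),
      (forall (a : R) (x y z : V), br x (a *: y + z) = a *: br x y + br x z),
      (forall x : V, br x x = 0) &
      (forall x y z : V, br x (br y z) + br y (br z x) + br z (br x y) = 0)].

Definition is_center (br : V -> V -> V) (Z : {vspace V}) : Prop :=
  forall x : V, x \in Z <-> (forall y : V, br x y = 0).

Definition is_derived (br : V -> V -> V) (D : {vspace V}) : Prop :=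
  (forall x y : V, br x y \in D) /\
  (forall D' : {vspace V}, (forall x y : V, br x y \in D') -> (D <= D')%VS).

Definition two_step_nilpotent (br : V -> V -> V) : Prop :=
  (exists x y : V, br x y <> 0) /\ (forall x y z : V, br (br x y) z = 0).

Definition complex_structure (br : V -> V -> V) (J : 'End(V)) : Prop :=
  (forall x : V, J (J x) = - x) /\
  (forall x y : V, br x y + J (br (J x) y + br x (J y)) - br (J x) (J y) = 0).

Fixpoint in_a (br : V -> V -> V) (J : 'End(V)) (l : nat) (x : V) : Prop :=
  match l with
  | 0 => x = 0
  | l'.+1 => forall y : V, in_a br J l' (br x y) /\ in_a br J l' (br (J x) y)
  end.

Definition step_nilpotent (br : V -> V -> V) (J : 'End(V)) (t : nat) : Prop :=
  (0 < t)%N /\ (forall x : V, in_a br J t x) /\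
  (forall s : nat, (0 < s)%N -> (s < t)%N -> ~ (forall x : V, in_a br J s x)).

End LieDefs.

(* Brackets of a 2-step nilpotent algebra are central, so J is 2-step as soon
   as J preserves the center z.  The Nijenhuis condition, applied to a central
   vector z0 with J z0 not central, produces a nonzero central w with J w
   central; since J^2 = -1 has no real eigenvalue, w and J w are independent,
   hence span z when dim z = 2.  For the second statement, a non-abelian
   algebra has 0 < dim z < dim n, so dim n >= 2 and the Betti number condition
   forces dim n' = 2. *)
From HB Require Import structures.
From mathcomp Require Import all_boot all_order all_algebra.
From mathcomp Require Import reals.
From Stdlib Require Import Classical.
From mathcomp Require Import zify.
Set Implicit Arguments. Unset Strict Implicit. Unset Printing Implicit Defensive.
Import Order.TTheory GRing.Theory Num.Theory.
Local Open Scope ring_scope.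

Lemma free_Jpair (R : realFieldType) (V : vectType R) (J : 'End(V)) (w : V) :
  (forall x, J (J x) = - x) -> w != 0 -> free [:: w; J w].
Proof.
move=> JJ w0; have Jw0 : J w != 0.
  by apply: contraNneq w0 => Jw_0; rewrite -oppr_eq0 -JJ Jw_0 linear0.
rewrite free_cons seq1_free Jw0 andbT span_seq1; apply/negP => /vlineP [k Jw].
have JwE : J w = - (k *: w) by rewrite {1}Jw linearZ /= JJ scalerN.
have : (k ^+ 2 + 1) *: w = 0.
  by rewrite scalerDl scale1r expr2 -scalerA -[k *: w]opprK -JwE scalerN -Jw addNr.
by move/eqP; rewrite scaler_eq0 (negbTE w0) orbF paddr_eq0 ?sqr_ge0 // oner_eq0 andbF.
Qed.

Lemma Jstable_dim2 (R : realFieldType) (V : vectType R) (J : 'End(V))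
    (Z : {vspace V}) (w : V) :
  (forall x, J (J x) = - x) -> \dim Z = 2%N ->
  w != 0 -> w \in Z -> J w \in Z -> forall z, z \in Z -> J z \in Z.
Proof.
move=> JJ dimZ w0 wZ JwZ.
have sub_wZ : (<<[:: w; J w]>> <= Z)%VS.
  by apply/span_subvP => v; rewrite !inE => /orP[] /eqP ->.
have span_wZ : <<[:: w; J w]>>%VS = Z.
  by apply/eqP; rewrite eqEdim sub_wZ dimZ (eqP (free_Jpair JJ w0)).
move=> z; rewrite -{1}span_wZ span_cons span_seq1.
move=> /memv_addP [_ /vlineP [a ->] [_ /vlineP [b ->] ->]].
by rewrite linearD !linearZ /= JJ memvD ?memvZ ?memvN.
Qed.

Section TwoStep.
Variables (R : realType) (V : vectType R) (br : V -> V -> V) (Z : {vspace V}).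
Hypothesis nil2 : two_step_nilpotent br.
Hypothesis centerZ : is_center br Z.

Lemma bracket_center x y : br x y \in Z.
Proof. by apply/centerZ => w; case: nil2 => _ ->. Qed.

Lemma center_proper : (0 < \dim Z < \dim {:V})%N.
Proof.
case: nil2 => [[x [y xy_neq0]] _]; apply/andP; split.
  rewrite lt0n dimv_eq0; apply: contraTneq (bracket_center x y) => ->.
  by rewrite memv0; apply/eqP.
rewrite ltnNge; apply: contra_notN (xy_neq0) => dimVZ.
have /eqP Zfull : Z == fullv by rewrite eqEdim subvf.
by move: (memvf x); rewrite -Zfull => /centerZ.
Qed.

Lemma in_a1_center (J : 'End(V)) x :
  in_a br J 1 x <-> x \in Z /\ J x \in Z.
Proof.
split=> [a1x | [/centerZ xZ /centerZ JxZ] y]; last by [].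
by split; apply/centerZ => y; case: (a1x y).
Qed.

Lemma step2_of_center_stable (J : 'End(V)) :
  (forall z, z \in Z -> J z \in Z) -> step_nilpotent br J 2.
Proof.
move=> JZ; split=> //; split.
  by move=> x y; split; apply/in_a1_center; rewrite bracket_center JZ ?bracket_center.
move=> s s_gt0 s_lt2; have s1 : s = 1%N by lia.
subst s => a1_full; case: nil2 => [[x [y xy_neq0]] _].
have [/centerZ x_central _] := (in_a1_center J x).1 (a1_full x).
exact: xy_neq0 (x_central y).
Qed.

Lemma complex_structure_center_pair (J : 'End(V)) :
  complex_structure br J -> exists w, [/\ w != 0, w \in Z & J w \in Z].
Proof.
case=> JJ nijenhuis; case: nil2 => [[x0 [y0 z0_neq0]] _].
set z0 := br x0 y0; have z0Z : z0 \in Z := bracket_center x0 y0.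
have /centerZ z0_central := z0Z.
have [Jz0Z | Jz0NZ] := boolP (J z0 \in Z).
  by exists z0; split=> //; apply/eqP.
have [y1 Jz0y1_neq0] : exists y1, br (J z0) y1 <> 0.
  by apply/not_all_ex_not; apply: contraNnot Jz0NZ => /centerZ.
(* Nijenhuis at (z0, -J y1) reads J [J z0, -J y1] = [J z0, y1]. *)
have J_br : J (br (J z0) (- J y1)) = br (J z0) y1.
  have := nijenhuis z0 (- J y1).
  rewrite !z0_central add0r addr0 linearN /= JJ opprK => /eqP.
  by rewrite subr_eq0 => /eqP.
exists (br (J z0) y1); split; first exact/eqP.
  exact: bracket_center.
by rewrite -J_br JJ memvN bracket_center.
Qed.

Lemma complex_structure_step2 (J : 'End(V)) :
  \dim Z = 2%N -> complex_structure br J -> step_nilpotent br J 2.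
Proof.
move=> dimZ cJ; have [w [w0 wZ JwZ]] := complex_structure_center_pair cJ.
exact/step2_of_center_stable/(Jstable_dim2 cJ.1 dimZ w0 wZ JwZ).
Qed.

End TwoStep.

Theorem mainTheorem5 (R : realType) (V : vectType R) (br : V -> V -> V) :
  is_lie_bracket br -> two_step_nilpotent br ->
  (forall Z : {vspace V}, is_center br Z -> \dim Z = 2%N ->
     forall J : 'End(V), complex_structure br J -> step_nilpotent br J 2)
  /\
  (forall Z D : {vspace V}, is_center br Z -> is_derived br D -> D = Z ->
     (\dim {:V} - \dim D = \dim {:V} - 2)%N ->
     forall J : 'End(V), complex_structure br J -> step_nilpotent br J 2).
Proof.
move=> _ nil2; split=> [Z centerZ | Z D centerZ _ -> betti] J cJ.
  exact: complex_structure_step2.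
apply: (complex_structure_step2 nil2 centerZ) cJ.
have /andP [] := center_proper nil2 centerZ; lia.
Qed.
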